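(* Let $k,s$ be positive integers and suppose that $K_{k+1,s}$ admits a balanced $k$-page embedding. Let $n\ge s$ be an integer and $q:=n\bmod s$. Then \[ \nu_k(K_{k+1,n}) \le q\binom{\frac{n-q}{s}+1}{2} + (s-q)\binom{\frac{n-q}{s}}{2}. \]
   Context: A book with $k$ pages consists of a line (the spine) and $k$ half-planes (the pages) whose common boundary is the spine. A $k$-page drawing of a graph places all vertices on the spine and draws each edge inside a single page; a $k$-page embedding is one without crossings. $\nu_k(G)$ is the minimum number of crossings over all $k$-page drawings of $G$. In $K_{k+1,s}$, call the $k+1$ vertices of degree $s$ black and the $s$ vertices of degree $k+1$ white. In a $k$-page embedding, the load of a white vertex $v$ in a page is the number of edges incident with $v$ drawn in that page. A $k$-page embedding of $K_{k+1,s}$ is balanced if every white vertex has load exactly $1$ in $k-1$ of the pages (hence load $2$ in the remaining page). Convention: $\binom{a}{b}=0$ whenever $a<b$. *)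

From mathcomp Require Import all_boot.
Set Implicit Arguments. Unset Strict Implicit. Unset Printing Implicit Defensive.

(* K_{m,n}: black vertices 'I_m, white vertices 'I_n; vertex type 'I_m + 'I_n;
   edges are pairs (i, j) : 'I_m * 'I_n joining inl i and inr j. *)

Record bdrawing (k m n : nat) := BDrawing {
  pos : 'I_m + 'I_n -> nat;
  pos_inj : injective pos;
  page : 'I_m * 'I_n -> 'I_k
}.

Section Drawings.
Variables (k m n : nat) (D : bdrawing k m n).

Definition lend (e : 'I_m * 'I_n) : nat :=
  minn (pos D (inl e.1)) (pos D (inr e.2)).
Definition rend (e : 'I_m * 'I_n) : nat :=
  maxn (pos D (inl e.1)) (pos D (inr e.2)).

(* Edges e and f (same page) cross, with e starting first:
   their endpoints interleave  lend e < lend f < rend e < rend f.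
   Every crossing pair is thus counted exactly once (as an ordered pair). *)
Definition crosses (e f : 'I_m * 'I_n) : bool :=
  [&& page D e == page D f, lend e < lend f, lend f < rend e & rend e < rend f].

Definition crossings : nat :=
  #|[set p : ('I_m * 'I_n) * ('I_m * 'I_n) | crosses p.1 p.2]|.

Definition load (v : 'I_n) (p : 'I_k) : nat :=
  #|[set i : 'I_m | page D (i, v) == p]|.

End Drawings.

Definition balanced_embedding (k s : nat) (D : bdrawing k k.+1 s) : Prop :=
  crossings D = 0 /\
  forall v : 'I_s, #|[set p : 'I_k | load D v p == 1]| = k - 1.

From mathcomp Require Import all_boot zify.
Set Implicit Arguments. Unset Strict Implicit. Unset Printing Implicit Defensive.

(* Blow up a balanced embedding D of K_{k+1,s}: the white vertex j of K_{k+1,n}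
   becomes a copy of the white vertex j mod s of D, the copies of a vertex are
   placed consecutively next to it, and every edge keeps the page of its
   original.  Edges to copies of distinct vertices of D cross only if their
   originals do, i.e. never.  Edges to copies j, j' of the same vertex v can
   only cross on the unique page where v has load 2, and then the two black
   vertices on that page and the pair {j, j'} determine the crossing.  So there
   is at most one crossing per pair j < j' with j = j' (mod s), and there are
   sum_(j < n) j %/ s = q 'C(m + 1, 2) + (s - q) 'C(m, 2) of them, where
   n = m s + q with q < s. *)

Lemma set2_eq_cases (T : finType) (x y x' y' : T) :
  x' != y' -> [set x; y] = [set x'; y'] -> (x' = x /\ y' = y) \/ (x' = y /\ y' = x).
Proof.
move=> ne' eq_xy.
have /set2P x'_xy : x' \in [set x; y] by rewrite eq_xy set21.
have /set2P y'_xy : y' \in [set x; y] by rewrite eq_xy set22.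
move: ne'; case: x'_xy y'_xy => -> [] ->; rewrite ?eqxx //; by [left | right].
Qed.

Lemma ltn_mulD_offset N A B o o' : o < N -> o' < N -> A != B ->
  (A * N + o < B * N + o') = (A < B).
Proof.
move=> lt_o lt_o' ne_AB; case: (ltngtP A B) ne_AB => //= cmp _;
  have := leq_mul cmp (leqnn N); rewrite mulSn; lia.
Qed.

Lemma card_ord_between n x : #|[set d : 'I_n | 0 < d <= x]| = minn x n.-1.
Proof.
rewrite -sum1dep_card big_mkcond /=.
elim: n => [|n IHn]; first by rewrite big_ord0; lia.
by rewrite big_ord_recr /= IHn; case: n {IHn} => [|n] /=; case: leqP; lia.
Qed.

Lemma sum_divn_ord s N : 0 < s ->
  \sum_(a < N) a %/ s = N %% s * 'C(N %/ s + 1, 2) + (s - N %% s) * 'C(N %/ s, 2).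
Proof.
move=> s_gt0; move: (N %/ s) (N %% s) (divn_eq N s) (ltn_pmod N s_gt0) => m r -> /ltnW.
(* Allowing [r = s] lets the inner induction on [r] reach the next block. *)
rewrite addn1; elim: m r => [|m IHm] r le_rs.
  rewrite big1 ?bin_small ?muln0 // => a _; apply/divn_small/(leq_trans _ le_rs)/ltn_ord.
elim: r le_rs => [|r IHr] lt_rs; first by rewrite addn0 mulSn addnC IHm // subnn subn0; lia.
rewrite addnS big_ord_recr /= IHr 1?ltnW // divnMDl ?divn_small //.
by rewrite [in 'C(m.+2, 2)]binS bin1; nia.
Qed.

Definition same_residue_pairs (s n : nat) : {set 'I_n * 'I_n} :=
  [set p : 'I_n * 'I_n | (p.1 < p.2) && (p.1 %% s == p.2 %% s)].

Section SameResiduePairs.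
Variables s n : nat.

Lemma same_residue_gapE p : p \in same_residue_pairs s n ->
  (p.2 - p.1) %/ s * s = p.2 - p.1 /\ p.1 < p.2.
Proof.
rewrite inE => /andP [lt_p eq_mod]; split => //.
by apply: divnK; rewrite -eqn_mod_dvd 1?eq_sym // ltnW.
Qed.

Lemma gap_lt (p : 'I_n * 'I_n) : (p.2 - p.1) %/ s < n.
Proof. exact: leq_ltn_trans (leq_div _ _) (leq_ltn_trans (leq_subr _ _) (ltn_ord _)). Qed.

(* A pair [i < j] with [i = j %[mod s]] is recorded by [j] and the number
   [(j - i) %/ s] of periods between them, which lies in [1, j %/ s]. *)
Definition gap_code (p : 'I_n * 'I_n) : 'I_n * 'I_n := (p.2, Ordinal (gap_lt p)).

Lemma card_same_residue_pairs_le : #|same_residue_pairs s n| <= \sum_(j < n) j %/ s.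
Proof.
set Z := [set x : 'I_n * 'I_n | 0 < x.2 <= x.1 %/ s].
have cardZ : #|Z| = \sum_(j < n) j %/ s.
  rewrite -sum1dep_card -(pair_big_dep xpredT (fun (j d : 'I_n) => 0 < d <= j %/ s) (fun _ _ => 1)) /=.
  apply: eq_bigr => j _; rewrite sum1dep_card card_ord_between.
  by have := leq_div j s; have := ltn_ord j; lia.
have code_inj : {in same_residue_pairs s n &, injective gap_code}.
  move=> [i j] [i' j'] /same_residue_gapE [/= gap lt] /same_residue_gapE [/= gap' lt'].
  case=> eq_j eq_gap.
  have eq_diff : j - i = j' - i' by rewrite -gap -gap' eq_gap.
  by rewrite -eq_j in eq_diff lt' *; congr (_, _); apply: val_inj => /=; lia.
rewrite -cardZ -(card_in_imset code_inj); apply/subset_leq_card/subsetP.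
move=> x /imsetP [p /same_residue_gapE [gap lt_p] ->]; rewrite inE /=.
by rewrite leq_div2r ?leq_subr // andbT; move: gap lt_p; case: (_ %/ s) => //=; lia.
Qed.

End SameResiduePairs.

Definition interleave (a b c d : nat) : bool :=
  [&& minn a b < minn c d, minn c d < maxn a b & maxn a b < maxn c d].

Lemma crossesE k m n (D : bdrawing k m n) (e f : 'I_m * 'I_n) :
  crosses D e f = (page D e == page D f) &&
    interleave (pos D (inl e.1)) (pos D (inr e.2)) (pos D (inl f.1)) (pos D (inr f.2)).
Proof. by []. Qed.

Lemma interleave_neq a b c d : interleave a b c d -> a != c /\ b != d.
Proof. by move=> /and3P [? ? ?]; split; apply/eqP; lia. Qed.

Lemma interleave_order (T : eqType) (P Q : T -> nat) (x1 x2 x3 x4 : T) :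
  {in [:: x1; x2; x3; x4] &, forall x y, (P x < P y) = (Q x < Q y)} ->
  interleave (P x1) (P x2) (P x3) (P x4) = interleave (Q x1) (Q x2) (Q x3) (Q x4).
Proof.
move=> PQ; rewrite /interleave !(ltn_min, gtn_min, leq_max, gtn_max).
by rewrite !PQ // !inE !eqxx ?orbT.
Qed.

Lemma interleave_same_side a b c d :
  (a < b) = (a < d) -> (c < b) = (c < d) -> interleave a b c d ->
  ~~ [|| interleave c d a b, interleave a d c b | interleave c b a d].
Proof. rewrite /interleave; lia. Qed.

Lemma crossings_eq0 k m n (D : bdrawing k m n) e f :
  crossings D = 0 -> ~~ crosses D e f.
Proof.
move/cards0_eq=> no_cross; apply/negP => cr.
by have := in_set0 (e, f); rewrite -no_cross inE cr.
Qed.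

Lemma sum_load k m n (D : bdrawing k m n) (v : 'I_n) :
  \sum_(p : 'I_k) load D v p = m.
Proof.
transitivity (\sum_(p : 'I_k) \sum_(i : 'I_m) (page D (i, v) == p : nat)).
  by apply: eq_bigr => p _; rewrite /load -sum1dep_card big_mkcond.
rewrite exchange_big -[RHS]card_ord -sum1_card; apply: eq_bigr => i _.
by rewrite (bigD1 (page D (i, v))) //= eqxx big1 // => p; rewrite eq_sym => /negbTE ->.
Qed.

Lemma page_pair_sub k m n (D : bdrawing k m n) v (i1 i2 : 'I_m) :
  page D (i1, v) = page D (i2, v) ->
  [set i1; i2] \subset [set i | page D (i, v) == page D (i1, v)].
Proof. by move=> same; apply/subsetP => i /set2P [] ->; rewrite inE ?same. Qed.

Section Balanced.
Variables (k s : nat) (D : bdrawing k k.+1 s).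
Hypothesis balD : forall v : 'I_s, #|[set p : 'I_k | load D v p == 1]| = k - 1.

Lemma heavy_page_unique v p p' :
  2 <= load D v p -> 2 <= load D v p' -> p = p' /\ load D v p = 2.
Proof.
move=> heavy heavy'; have k_gt0 : 0 < k by apply: leq_ltn_trans (ltn_ord p).
have := sum_load D v; rewrite (bigID (fun p => load D v p == 1)) /=.
rewrite (eq_bigr (fun=> 1)) => [|q /eqP //]; rewrite sum1dep_card balD.
rewrite (bigD1 p) /=; last by rewrite neq_ltn heavy orbT.
case: (eqVneq p' p) => [-> | ne]; first by split => //; lia.
by rewrite (bigD1 p') /= ?ne ?neq_ltn ?heavy' ?orbT //; lia.
Qed.

Lemma doubled_pair_unique v (i1 i2 i1' i2' : 'I_k.+1) :
  i1 != i2 -> page D (i1, v) = page D (i2, v) ->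
  i1' != i2' -> page D (i1', v) = page D (i2', v) ->
  [set i1; i2] = [set i1'; i2'].
Proof.
move=> ne same ne' same'.
have sub := page_pair_sub same; have sub' := page_pair_sub same'.
have heavy : 2 <= load D v (page D (i1, v)).
  by have := subset_leq_card sub; rewrite cards2 ne.
have heavy' : 2 <= load D v (page D (i1', v)).
  by have := subset_leq_card sub'; rewrite cards2 ne'.
have [eq_p two] := heavy_page_unique heavy heavy'.
have /eqP -> : [set i1; i2] == [set i | page D (i, v) == page D (i1, v)].
  by rewrite eqEcard sub cards2 ne -[#|_|]/(load D v _) two.
have /eqP -> // : [set i1'; i2'] == [set i | page D (i, v) == page D (i1, v)].
by rewrite eq_p eqEcard sub' cards2 ne' -[#|_|]/(load D v _) -eq_p two.
Qed.

End Balanced.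

Section BlowUp.
Variables (k m s n : nat) (D : bdrawing k m s) (f : 'I_n -> 'I_s).

Definition blowup_vertex (x : 'I_m + 'I_n) : 'I_m + 'I_s :=
  match x with inl i => inl i | inr j => inr (f j) end.

Definition blowup_offset (x : 'I_m + 'I_n) : nat := if x is inr j then j else 0.

(* The positions of [D] are spread out to gaps of width [n.+1]; the copy [j]
   of the white vertex [f j] sits at offset [j] in the gap of [f j]. *)
Definition blowup_pos (x : 'I_m + 'I_n) : nat :=
  pos D (blowup_vertex x) * n.+1 + blowup_offset x.

Lemma blowup_offset_lt x : blowup_offset x < n.+1.
Proof. by case: x => [i|j] //=; apply: leqW. Qed.

Lemma blowup_pos_inj : injective blowup_pos.
Proof.
move=> x y eq_xy.
have eq_div := congr1 (divn^~ n.+1) eq_xy; have eq_mod := congr1 (modn^~ n.+1) eq_xy.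
rewrite /= /blowup_pos !divnMDl ?divn_small ?blowup_offset_lt // !addn0 in eq_div.
rewrite /= /blowup_pos !modnMDl ?modn_small ?blowup_offset_lt // in eq_mod.
move: eq_mod (pos_inj eq_div); clear eq_xy eq_div.
case: x y => [i|j] [i'|j'] //= eq_off [] => [-> // | _].
by congr inr; apply: val_inj.
Qed.

Lemma blowup_pos_ltE x y : blowup_vertex x != blowup_vertex y ->
  (blowup_pos x < blowup_pos y) = (pos D (blowup_vertex x) < pos D (blowup_vertex y)).
Proof.
move=> ne; rewrite ltn_mulD_offset ?blowup_offset_lt //.
by apply: contra ne => /eqP /pos_inj ->.
Qed.

Definition blowup : bdrawing k m n :=
  BDrawing blowup_pos_inj (fun e => page D (e.1, f e.2)).

Lemma blowup_crosses a j c j' : f j != f j' ->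
  crosses blowup (a, j) (c, j') -> crosses D (a, f j) (c, f j').
Proof.
rewrite !crossesE /= => ne_f /andP [-> il]; move: (il) => /interleave_neq [ne_a _].
have {}ne_a : a != c by apply: contraNneq ne_a => ->.
have order_eq : {in [:: inl a; inr j; inl c; inr j'] &, forall x y,
    (blowup_pos x < blowup_pos y) = (pos D (blowup_vertex x) < pos D (blowup_vertex y))}.
  move=> x y; rewrite !inE => /or4P [] /eqP -> /or4P [] /eqP ->;
    by rewrite ?ltnn // blowup_pos_ltE //= 1?eq_sym ?ne_a ?ne_f.
by rewrite (interleave_order order_eq) in il.
Qed.

Lemma blowup_crossing_copies a j c j' : crossings D = 0 ->
  crosses blowup (a, j) (c, j') ->
  [/\ f j = f j', a != c, j != j' & page D (a, f j) = page D (c, f j)].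
Proof.
move=> noD cr; have fj : f j = f j'.
  apply/eqP; apply: contraT => ne_f.
  by have := crossings_eq0 (a, f j) (c, f j') noD; rewrite blowup_crosses.
move: cr; rewrite crossesE => /andP [/eqP same /interleave_neq [ne_a ne_j]].
split => //; first by apply: contraNneq ne_a => ->.
  by apply: contraNneq ne_j => ->.
by rewrite [in RHS]fj.
Qed.

End BlowUp.

Definition white_ends (m n : nat) (p : ('I_m * 'I_n) * ('I_m * 'I_n)) : 'I_n * 'I_n :=
  if p.1.2 < p.2.2 then (p.1.2, p.2.2) else (p.2.2, p.1.2).

Lemma white_endsE m n (p : ('I_m * 'I_n) * ('I_m * 'I_n)) :
  [set (white_ends p).1; (white_ends p).2] = [set p.1.2; p.2.2].
Proof. by rewrite /white_ends; case: ifP => _ //; rewrite setUC. Qed.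

Section ResidueBlowUp.
Variables (k s n : nat) (D : bdrawing k k.+1 s).
Hypotheses (s_gt0 : 0 < s) (D_embedding : crossings D = 0).
Hypothesis balD : forall v : 'I_s, #|[set p : 'I_k | load D v p == 1]| = k - 1.

Definition residue (j : 'I_n) : 'I_s := Ordinal (ltn_pmod j s_gt0).

Local Notation DR := (blowup D residue).

(* Both black ends lie on the same side of the block of copies of [residue j1],
   so [interleave_same_side] leaves a single way to realise the crossing. *)
Lemma residue_blowup_crossing_unique e f e' f' :
  crosses DR e f -> crosses DR e' f' -> [set e.2; f.2] = [set e'.2; f'.2] ->
  (e, f) = (e', f').
Proof.
case: e f e' f' => [a j1] [c j2] [a' j1'] [c' j2'] /= cr cr' ends.
have [res_j ne_a ne_j same] := blowup_crossing_copies D_embedding cr.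
have [res_j' ne_a' ne_j' same'] := blowup_crossing_copies D_embedding cr'.
have res_j1' : residue j1' = residue j1.
  by case: (set2_eq_cases ne_j' ends) => -[-> _].
rewrite res_j1' in same'.
have blacks := doubled_pair_unique balD ne_a same ne_a' same'.
have side x : (blowup_pos D residue (inl x) < blowup_pos D residue (inr j1)) =
              (blowup_pos D residue (inl x) < blowup_pos D residue (inr j2)).
  by rewrite !blowup_pos_ltE //= res_j.
move: cr cr'; rewrite !crossesE /= => /andP [_ il] /andP [_ il'].
have := interleave_same_side (side a) (side c) il.
move: il'; case: (set2_eq_cases ne_a' blacks) => -[-> ->];
  case: (set2_eq_cases ne_j' ends) => -[-> ->] // il'; by rewrite il' ?orbT.
Qed.

Lemma white_ends_crossing p :
  crosses DR p.1 p.2 -> white_ends p \in same_residue_pairs s n.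
Proof.
case: p => [[a j] [c j']] /= /(blowup_crossing_copies D_embedding) [res_j _ ne_j _].
have mod_j : j %% s = j' %% s by have := congr1 val res_j.
move: ne_j; rewrite -val_eqE /white_ends inE /= => ne_j.
by case: ifP => /= [lt_j | /negbT]; rewrite mod_j eqxx andbT //; lia.
Qed.

Lemma crossings_residue_blowup_le : crossings DR <= #|same_residue_pairs s n|.
Proof.
set X := [set p | crosses DR p.1 p.2].
have ends_inj : {in X &, injective (@white_ends k.+1 n)}.
  move=> [e f] [e' f']; rewrite !inE => cr cr' eq_ends.
  by apply: residue_blowup_crossing_unique cr cr' _; rewrite -!(white_endsE (_, _)) eq_ends.
rewrite /crossings -/X -(card_in_imset ends_inj); apply/subset_leq_card/subsetP.
by move=> x /imsetP [p]; rewrite inE => /white_ends_crossing ends_p ->.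
Qed.

End ResidueBlowUp.

Theorem proposition18 (k s n : nat) :
  0 < k -> 0 < s ->
  (exists D : bdrawing k k.+1 s, balanced_embedding D) ->
  s <= n ->
  let q := n %% s in
  exists D : bdrawing k k.+1 n,
    crossings D <= q * 'C((n - q) %/ s + 1, 2) + (s - q) * 'C((n - q) %/ s, 2).
Proof.
move=> _ s_gt0 [D [D_embedding balD]] _ q.
exists (blowup D (residue s_gt0)).
apply: leq_trans (crossings_residue_blowup_le n s_gt0 D_embedding balD) _.
apply: leq_trans (card_same_residue_pairs_le s n) _.
have -> : (n - q) %/ s = n %/ s by rewrite {1}(divn_eq n s) addnK mulnK.
by rewrite sum_divn_ord.
Qed.
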